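(* Let $P$ be a finite bounded poset (minimum $\hat{0}$, maximum $\hat{1}$) with height function $h$, and let $H$ be the maximal value of $h$. Let $\operatorname{Inc}_q(P,h)$ be the set of matrices $A$ indexed by $P\times P$ with entries in $\mathbb{Z}[q,q^{-1}]$ and $A_{x,y}=0$ unless $x\le y$, with product $A\times_q B=AD_hB$, where $D_h$ is the diagonal matrix with entries $q^{h(x)}$; this is an associative product with unit $D_h^{-1}$. Let $Z$ be the zeta matrix ($Z_{x,y}=1$ if $x\le y$, $0$ otherwise), which is invertible for $\times_q$, and let $Z^{\times_q n}$, $n\in\mathbb{Z}$, be its powers for $\times_q$. Let $\Delta_q$ act on sequences $(a_n)_{n\in\mathbb{Z}}$ by $(\Delta_q a)_n=(a_n-a_{n-1})/q^n$. Then the sequence $(Z^{\times_q n})_{n\in\mathbb{Z}}$ is annihilated by $\Delta_q^{H+1}$, and for every $n\in\mathbb{Z}$, $\mathsf{Z}_{P,h}([n]_q)$ equals the entry of index $(\hat{0},\hat{1})$ of $Z^{\times_q n}$.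
   Context: $q$ is an indeterminate; $[n]_q=(q^n-1)/(q-1)$ for $n\in\mathbb{Z}$. A height function on $P$ is $h:P\to\mathbb{N}$ with $h(x)<h(y)$ whenever $y$ covers $x$. The $q$-Zeta polynomial $\mathsf{Z}_{P,h}\in\mathbb{Q}(q)[x]$ is the unique polynomial with $\mathsf{Z}_{P,h}([n]_q)=\sum_{e_1\le\cdots\le e_{n-1}\text{ in }P}q^{h(e_1)+\cdots+h(e_{n-1})}$ for all $n\ge2$ (explicitly $\sum_{k\ge1}\sum_{c_1<\cdots<c_k}q^{\sum h(c_i)}\mathsf{E}_{(h(c_1),\dots,h(c_k))}((x-[k+1]_q)/q^{k+1})$ with $\mathsf{E}_a$ the unique polynomial with $\mathsf{E}_a([m]_q)=\sum_{m'\in\mathbb{N}^k,\sum m'_i=m}q^{\sum a_im'_i}$ for $m\ge0$); its values at other $[n]_q$ are by evaluation. *)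

From HB Require Import structures.
From mathcomp Require Import all_boot all_order all_algebra.
Set Implicit Arguments. Unset Strict Implicit. Unset Printing Implicit Defensive.
Import Order.TTheory GRing.Theory Num.Theory.
Local Open Scope ring_scope.

Definition F : fieldType := {fraction {poly rat}}.
Definition q : F := tofrac ('X : {poly rat}).

Definition qint (n : int) : F := (q ^ n - 1) / (q - 1).

Section Poset.
Context {d : Order.disp_t} {P : finPOrderType d}.

Definition covers (x y : P) : bool :=
  ((x < y)%O && [forall z : P, ~~ ((x < z)%O && (z < y)%O)]).

Definition is_height (h : P -> nat) : Prop :=
  forall x y : P, covers x y -> (h x < h y)%N.

Definition Hmax (h : P -> nat) : nat := \max_(x : P) h x.

Definition multichain_sum (h : P -> nat) (k : nat) : F :=
  \sum_(t : k.-tuple P | sorted (fun x y : P => (x <= y)%O) t)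
     q ^+ (\sum_(x <- t) h x).

Definition is_qZeta (h : P -> nat) (p : {poly F}) : Prop :=
  forall n : nat, (2 <= n)%N -> p.[qint n] = multichain_sum h n.-1.

(* Matrices indexed by P x P, represented via enum_rank. *)
Notation MP := 'M[F]_#|P|.
Definition idx (x : P) : 'I_#|P| := enum_rank x.

Definition zetaM : MP := \matrix_(i, j) ((enum_val i <= enum_val j)%O)%:R.

Definition diagD (h : P -> nat) : MP := diag_mx (\row_i q ^+ h (enum_val i)).

Definition mulq (h : P -> nat) (A B : MP) : MP := A *m diagD h *m B.
Definition unitq (h : P -> nat) : MP := invmx (diagD h).
Definition invq (h : P -> nat) (A : MP) : MP := unitq h *m invmx A *m unitq h.

Definition powq (h : P -> nat) (A : MP) (n : int) : MP :=
  match n with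
  | Posz k => iter k (fun B => mulq h B A) (unitq h)
  | Negz k => iter k.+1 (fun B => mulq h B (invq h A)) (unitq h)
  end.

Definition DeltaQ (a : int -> MP) : int -> MP :=
  fun n => (q ^ n)^-1 *: (a n - a (n - 1)).

End Poset.

(* Put M := D_h Z, so that Z^{x_q n} = D_h^{-1} M^n for every integer n.  The
   matrix M is triangular for the order of P with diagonal entries q^{h(x)}, and
   h increases strictly along the order, so column y of
   (M - q^{k-1}) ... (M - q^0) vanishes as soon as h(y) < k; for k = H + 1 the
   product is 0.  Since Delta_q^k Z^{x_q n} = q^{-nk} Z^{x_q (n-k)} times this
   product, Delta_q^{H+1} kills the sequence.  A scalar sequence killed by
   Delta_q^{H+1} is a combination of the q^{nj}, j <= H, hence a polynomial in
   q^n = (q - 1)[n]_q + 1.  For n >= 1, the (0,1) entry of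
   Z^{x_q n} = (Z D_h)^{n-1} Z is the multichain sum, so this polynomial is a
   q-Zeta polynomial, unique because the [n]_q are pairwise distinct. *)

From Pilot Require Import Defs.
From mathcomp Require Import all_boot all_order all_algebra.
From mathcomp Require Import zify ring.
Import Order.TTheory GRing.Theory Num.Theory.
Local Open Scope ring_scope.

Section Height.
Context {d : Order.disp_t} {P : finPOrderType d} {h : P -> nat}.
Hypothesis h_height : is_height h.

Lemma height_homo_lt : {homo h : x y / (x < y)%O >-> (x < y)%N}.
Proof.
move=> x y; have [m] := ubnP #|[set z | (x < z < y)%O]|.
elim: m x y => // m IH x y lt_m lt_xy.
have [|] := boolP (covers x y); first exact: h_height.
rewrite /covers lt_xy /= => /forallPn[z]; rewrite negbK => /andP[lt_xz lt_zy].
have shorter (a b : P) : (x <= a)%O -> (b <= y)%O -> ~~ (a < z < b)%O ->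
    (#|[set w | (a < w < b)%O]| < m)%N.
  move=> le_xa le_by z_out; rewrite -ltnS (leq_trans _ lt_m) // ltnS.
  apply: proper_card.
  apply/properP; split; last by exists z; rewrite !inE ?lt_xz ?lt_zy.
  apply/subsetP => w; rewrite !inE => /andP[lt_aw lt_wb].
  by rewrite (le_lt_trans le_xa lt_aw) (lt_le_trans lt_wb le_by).
apply: (@ltn_trans (h z)); apply: IH => //; apply: shorter;
  by rewrite ?lexx ?ltW ?ltxx ?andbF.
Qed.

Lemma le_Hmax x : (h x <= Hmax h)%N.
Proof. exact: leq_bigmax. Qed.

End Height.

Lemma shift_invariant_const (T : Type) (g : int -> T) :
  (forall m, g m = g (m - 1)) -> forall m, g m = g 0.
Proof.
move=> g_shift; case=> k.
  elim: k => [|k IH] //; rewrite g_shift.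
  by have -> : Posz k.+1 - 1 = Posz k by lia.
rewrite NegzE; elim: k => [|k IH]; first by rewrite (g_shift 0).
by rewrite -IH (g_shift (- k.+1%:Z)); have -> : - k.+1%:Z - 1 = - k.+2%:Z by lia.
Qed.

Section QDifference.
Context {K : fieldType} (z : K).
Hypotheses (z_neq0 : z != 0) (z_nroot : forall k, z ^+ k.+1 != 1).

Definition qdiff (e : int -> K) (m : int) : K := (z ^ m)^-1 * (e m - e (m - 1)).

Lemma qdiff_eq0_const e : (forall m, qdiff e m = 0) -> forall m, e m = e 0.
Proof.
move=> De0; apply: shift_invariant_const => m; apply/eqP; rewrite -subr_eq0.
by have /eqP := De0 m; rewrite mulf_eq0 invr_eq0 expfz_eq0 (negPf z_neq0) andbF.
Qed.

Lemma qdiff_sum_pow (c : nat -> K) n m :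
  qdiff (fun t => \sum_(j < n) c j * (z ^ t) ^+ j.+1) m =
  \sum_(j < n) c j * (1 - z^-1 ^+ j.+1) * (z ^ m) ^+ j.
Proof.
rewrite /qdiff -sumrB mulr_sumr; apply: eq_bigr => j _.
rewrite exprzDr ?unitfE // exprN1 exprMn exprS.
by field; rewrite expfz_neq0.
Qed.

Lemma iter_qdiff_eq0_sum_pow n e : (forall m, iter n qdiff e m = 0) ->
  exists c : nat -> K, forall m, e m = \sum_(j < n) c j * (z ^ m) ^+ j.
Proof.
elim: n e => [|n IH] e Dne0.
  by exists (fun=> 0) => m; rewrite big_ord0; apply: Dne0.
have [c De] : exists c : nat -> K, forall m, qdiff e m = \sum_(j < n) c j * (z ^ m) ^+ j.
  by apply: IH => m; rewrite -iterSr.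
have nroot_inv j : 1 - z^-1 ^+ j.+1 != 0.
  by rewrite subr_eq0 exprVn eq_sym invr_eq1 z_nroot.
pose c' j := c j / (1 - z^-1 ^+ j.+1).
pose g t := e t - \sum_(j < n) c' j * (z ^ t) ^+ j.+1.
have g_const : forall m, g m = g 0.
  apply: qdiff_eq0_const => m.
  have -> : qdiff g m = qdiff e m -
      qdiff (fun t => \sum_(j < n) c' j * (z ^ t) ^+ j.+1) m.
    by rewrite /qdiff /g; ring.
  rewrite qdiff_sum_pow De; apply/eqP; rewrite subr_eq0; apply/eqP/eq_bigr => j _.
  by rewrite /c' divfK.
exists (fun j => if j is j'.+1 then c' j' else g 0) => m.
by rewrite big_ord_recl /= expr0 mulr1 -(g_const m) subrK.
Qed.

End QDifference.

Lemma q_neq0 : q != 0.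
Proof. by rewrite tofrac_eq0 polyX_eq0. Qed.

Lemma expq_inj : injective (GRing.exp q).
Proof.
move=> m n; rewrite /q -!rmorphXn => /eqP; rewrite tofrac_eq => /eqP.
by move/(congr1 (size : {poly rat} -> nat)); rewrite !size_polyXn => -[].
Qed.

Lemma expq_neq1 k : q ^+ k.+1 != 1.
Proof. by apply/eqP => /(@expq_inj k.+1 0). Qed.

Lemma qint_horner (m : int) : ((q - 1)%:P * 'X + 1).[qint m] = q ^ m.
Proof.
have q1_neq0 : q - 1 != 0 by rewrite subr_eq0 -(expr1 q) expq_neq1.
by rewrite hornerD hornerCM hornerX hornerC /qint mulrC divfK // subrK.
Qed.

Lemma eq_poly_qint (p1 p2 : {poly F}) :
  (forall n : nat, (2 <= n)%N -> p1.[qint n] = p2.[qint n]) -> p1 = p2.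
Proof.
move=> eq_p; apply/eqP; rewrite -subr_eq0; apply/negPn/negP => p_neq0.
pose roots := [seq qint i.+2 | i <- iota 0 (size (p1 - p2))].
have all_roots : all (root (p1 - p2)) roots.
  by apply/allP => _ /mapP[i _ ->]; rewrite rootE hornerD hornerN eq_p ?subrr.
have uniq_roots : uniq roots.
  rewrite map_inj_uniq ?iota_uniq // => i j eq_ij; have := qint_horner i.+2.
  by rewrite eq_ij qint_horner => /expq_inj [].
by have := max_poly_roots p_neq0 all_roots uniq_roots; rewrite size_map size_iota ltnn.
Qed.

Section Incidence.
Context {d : Order.disp_t} {P : finPOrderType d} {h : P -> nat}.
Hypothesis h_height : is_height h.
Local Notation n := #|P|.
Local Notation Z := (@zetaM d P).
Local Notation D := (diagD h).

Definition DZ : 'M[F]_n := D *m Z.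
Local Notation M := DZ.

Lemma diagD_unit : D \in unitmx.
Proof.
rewrite unitmxE det_diag unitfE; apply/prodf_neq0 => i _.
by rewrite mxE expf_neq0 // q_neq0.
Qed.

Lemma mulq_invqK (A X : 'M_n) : A \in unitmx ->
  Defs.mulq h X (Defs.invq h A) *m (D *m A) = X.
Proof.
move=> A_unit; rewrite /Defs.mulq /Defs.invq /unitq !mulmxA.
rewrite -[_ *m invmx D *m D]mulmxA (mulVmx diagD_unit) mulmx1.
rewrite -[_ *m invmx A *m A]mulmxA (mulVmx A_unit) mulmx1.
by rewrite -mulmxA (mulmxV diagD_unit) mulmx1.
Qed.

Lemma powq_rec {A : 'M_n} : A \in unitmx ->
  forall m, powq h A m = powq h A (m - 1) *m (D *m A).
Proof.
move=> A_unit [[|k]|k].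
- by rewrite mulq_invqK.
- have -> : Posz k.+1 - 1 = Posz k by lia.
  by rewrite /= /Defs.mulq mulmxA.
- have -> : Negz k - 1 = Negz k.+1 by rewrite !NegzE; lia.
  by rewrite /= mulq_invqK.
Qed.

Fixpoint qfall k : 'M[F]_n :=
  if k is k'.+1 then (M - (q ^+ k')%:M) *m qfall k' else 1%:M.

Lemma qfall_comm k : M *m qfall k = qfall k *m M.
Proof.
elim: k => [|k IH] /=; first by rewrite mulmx1 mul1mx.
have M_comm : M *m (M - (q ^+ k)%:M) = (M - (q ^+ k)%:M) *m M.
  by rewrite mulmxBr mulmxBl scalar_mxC.
by rewrite mulmxA M_comm -[_ *m M *m _]mulmxA IH mulmxA.
Qed.

Lemma qfallSr k : qfall k.+1 = qfall k *m (M - (q ^+ k)%:M).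
Proof. by rewrite /= mulmxBl mulmxBr -qfall_comm scalar_mxC. Qed.

Lemma DZE i j : M i j = q ^+ h (enum_val i) * ((enum_val i <= enum_val j)%O)%:R.
Proof. by rewrite /DZ mul_diag_mx !mxE. Qed.

Lemma qfall_col_eq0 k i j : (h (enum_val j) < k)%N -> qfall k i j = 0.
Proof.
elim: k i j => [//|k IH] i j lt_jk.
rewrite qfallSr mxE big1 // => l _; rewrite mxE DZE !mxE.
have [->|neq_lj] := eqVneq l j.
  rewrite lexx mulr1 mulr1n.
  case: (ltngtP (h (enum_val j)) k) => [lt_jk'|lt_kj|->].
  - by rewrite IH ?mul0r.
  - by rewrite ltnS leqNgt lt_kj in lt_jk.
  - by rewrite subrr mulr0.
rewrite mulr0n subr0.
have [le_lj|] := boolP (enum_val l <= enum_val j)%O; last by rewrite mulr0 mulr0.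
have lt_lj : (enum_val l < enum_val j)%O.
  by rewrite lt_neqAle le_lj andbT (inj_eq enum_val_inj).
by rewrite IH ?mul0r // (leq_trans (height_homo_lt h_height _ _ lt_lj)).
Qed.

Lemma qfall_eq0 : qfall (Hmax h).+1 = 0.
Proof. by apply/matrixP => i j; rewrite [RHS]mxE qfall_col_eq0 // ltnS le_Hmax. Qed.

Lemma mulmx_qfall_ker k m (u : 'M_(m, n)) : u *m M = 0 ->
  u *m qfall k = (\prod_(j < k) - q ^+ j) *: u.
Proof.
move=> uM0; elim: k => [|k IH] /=; first by rewrite big_ord0 scale1r mulmx1.
rewrite mulmxA mulmxBr uM0 sub0r mul_mx_scalar mulNmx -scalemxAl IH.
by rewrite scalerA big_ord_recr /= mulrN scaleNr mulrC.
Qed.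

Lemma DZ_unit : M \in unitmx.
Proof.
(* qfall (Hmax h).+1 is a polynomial in M with nonzero constant term. *)
have prod_neq0 : \prod_(j < (Hmax h).+1) - q ^+ j != 0.
  by apply/prodf_neq0 => j _; rewrite oppr_eq0 expf_neq0 // q_neq0.
rewrite -row_free_unit -kermx_eq0.
have := mulmx_qfall_ker (Hmax h).+1 _ _ (mulmx_ker M).
by rewrite qfall_eq0 mulmx0 => /esym/eqP; rewrite scaler_eq0 (negPf prod_neq0).
Qed.

Lemma zetaM_unit : Z \in unitmx.
Proof. by have := DZ_unit; rewrite unitmx_mul => /andP[]. Qed.

Lemma iter_DeltaQ_powq k (m : int) : iter k DeltaQ (powq h Z) m =
  (q ^ m)^-1 ^+ k *: (powq h Z (m - k%:Z) *m qfall k).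
Proof.
elim: k m => [|k IH] m; first by rewrite /= expr0 scale1r subr0 mulmx1.
rewrite [LHS]/= /DeltaQ !IH (powq_rec zetaM_unit (m - k%:Z)) -/M.
have -> : m - k%:Z - 1 = m - k.+1%:Z by lia.
have -> : m - 1 - k%:Z = m - k.+1%:Z by lia.
rewrite exprzDr ?unitfE ?q_neq0 // exprN1 invfM invrK exprMn.
rewrite [qfall k.+1]/= [in RHS]mulmxA [in RHS]mulmxBr mul_mx_scalar mulmxBl.
by rewrite -scalemxAl !scalerBr !scalerA mulrA -exprS.
Qed.

Lemma iter_DeltaQ_powq_eq0 m : iter (Hmax h).+1 DeltaQ (powq h Z) m = 0.
Proof. by rewrite iter_DeltaQ_powq qfall_eq0 mulmx0 scaler0. Qed.

Lemma iter_DeltaQ_entry (A : int -> 'M[F]_n) k m i j :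
  iter k DeltaQ A m i j = iter k (qdiff q) (fun t => A t i j) m.
Proof. by elim: k m => [//|k IH] m; rewrite /= /qdiff /DeltaQ !mxE -!IH. Qed.

Lemma powq_zetaS (k : nat) : powq h Z k.+1 = Z *m D *m powq h Z k.
Proof.
have powqSr j : powq h Z j.+1 = powq h Z j *m D *m Z by [].
elim: k => [|k IH].
  by rewrite powqSr /unitq (mulVmx diagD_unit) mul1mx -mulmxA (mulmxV diagD_unit) mulmx1.
by rewrite powqSr {1}IH powqSr !mulmxA.
Qed.

Lemma sum_enum_rank (G : 'I_n -> F) : \sum_(l < n) G l = \sum_(x : P) G (idx x).
Proof. by rewrite (reindex idx) //; apply: onW_bij (enum_rank_bij _). Qed.

Lemma powq_zeta_chains (k : nat) (x y : P) :
  powq h Z k.+1 (idx x) (idx y) =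
  \sum_(t : k.-tuple P | path <=%O x t && (last x t <= y)%O) q ^+ (\sum_(z <- t) h z).
Proof.
elim: k x y => [|k IH] x y.
  rewrite powq_zetaS /= /unitq -mulmxA (mulmxV diagD_unit) mulmx1 mxE /idx !enum_rankK.
  rewrite big_mkcond (eq_bigr (fun=> (x <= y)%O%:R)) ?sumr_const ?card_tuple //.
  by move=> t _; rewrite tuple0 /= big_nil expr0; case: (x <= y)%O.
rewrite powq_zetaS mxE sum_enum_rank.
transitivity (\sum_(z : P) \sum_(t : k.-tuple P)
   (if (x <= z)%O && path <=%O z t && (last z t <= y)%O
    then q ^+ (h z + \sum_(w <- t) h w) else 0)).
  apply: eq_bigr => z _; rewrite IH mulr_sumr big_mkcond; apply: eq_bigr => t _.
  rewrite mul_mx_diag !mxE /idx !enum_rankK.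
  by case: (x <= z)%O; case: (_ && _); rewrite ?mul1r ?mul0r ?mulr0 ?exprD.
rewrite pair_big /= [RHS]big_mkcond.
rewrite (reindex (fun p : P * k.-tuple P => [tuple of p.1 :: p.2])) /=.
  by apply: eq_bigr => -[z t] _; rewrite big_cons.
apply: onW_bij; exists (fun t : k.+1.-tuple P => (thead t, [tuple of behead t])).
  by move=> [z t]; congr (_, _); apply: val_inj.
by move=> t; rewrite [RHS]tuple_eta.
Qed.

End Incidence.

Lemma powq_zeta_multichain {d : Order.disp_t} {P : finTBPOrderType d} (h : P -> nat) k :
  powq h zetaM k.+1 (idx (\bot : P)%O) (idx (\top : P)%O) = multichain_sum h k.
Proof.
rewrite powq_zeta_chains /multichain_sum; apply: eq_bigl => t.
by rewrite lex1 andbT; case: t => [[|z s] ?] //=; rewrite le0x.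
Qed.

Theorem mainTheorem9 (d : Order.disp_t) (P : finTBPOrderType d) (h : P -> nat)
    (hh : is_height h) :
  (forall n : int,
      iter (Hmax h).+1 DeltaQ (powq h zetaM) n = 0) /\
  (exists p : {poly F}, is_qZeta h p) /\
  (forall p : {poly F}, is_qZeta h p ->
     forall n : int,
       p.[qint n] = powq h zetaM n (idx (\bot : P)%O) (idx (\top : P)%O)).
Proof.
have annihilated := iter_DeltaQ_powq_eq0 hh.
split=> //.
pose e m := powq h zetaM m (idx (\bot : P)%O) (idx (\top : P)%O).
have [c e_sum] : exists c : nat -> F,
    forall m, e m = \sum_(j < (Hmax h).+1) c j * (q ^ m) ^+ j.
  apply: (iter_qdiff_eq0_sum_pow q q_neq0 expq_neq1) => m.
  by rewrite -iter_DeltaQ_entry annihilated mxE.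
pose p0 := \sum_(j < (Hmax h).+1) c j *: ((q - 1)%:P * 'X + 1) ^+ j.
have p0E m : p0.[qint m] = e m.
  by rewrite e_sum horner_sum; apply: eq_bigr => j _; rewrite hornerZ horner_exp qint_horner.
have p0_qZeta : is_qZeta h p0.
  by case=> [|[|k]] // _; rewrite p0E /e powq_zeta_multichain.
split; first by exists p0.
move=> p p_qZeta m.
have -> : p = p0 by apply: eq_poly_qint => n n_ge2; rewrite p_qZeta ?p0_qZeta.
exact: p0E.
Qed.
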